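(* Let $\varepsilon,\delta\ge0$, $\alpha\ge0$, $p\in[0,1]$. Suppose $\mathcal M$ is an $(\varepsilon,\delta)$-DP mechanism for offline prefix-sum estimation on inputs $s\in\mathbb R^n$ that outputs $(a^1,\dots,a^n)$ with $\max_{k\in[n]}|a^k-\sum_{i=1}^k s_i|\le\alpha$ with probability at least $p$. Then the mechanism that, given a frequency vector $f\in\mathbb N^n$, sorts $f$ in non-increasing order to obtain $s$ and outputs $\mathcal M(s)$ is $(\varepsilon,\delta)$-DP for static $\textsc{TopK}$, and with probability at least $p$ its output satisfies $|a^k-\|f\|_{\mathrm{top}\text{-}k}|\le\alpha$ for all $k\in[n]$.
   Context: Offline prefix-sum estimation: input $s=(s_1,\dots,s_n)\in\mathbb R^n$, output estimates $a^k$ of $\sum_{i\le k}s_i$ for all $k\in[n]$; inputs $s,s'$ are neighboring if $\|s-s'\|_1\le1$. Static $\textsc{TopK}$: input a frequency vector $f\in\mathbb N^n$ (of a set of updates given up front); output estimates of $\|f\|_{\mathrm{top}\text{-}k}=\sum_{i=1}^kf_{\sigma(i)}$ for all $k\in[n]$, where $\sigma$ sorts $f$ in non-increasing order; two frequency vectors are neighboring if they agree in all coordinates except one, where they differ by exactly $1$. $(\varepsilon,\delta)$-DP: $\Pr[\mathcal A(x)\in S]\le e^\varepsilon\Pr[\mathcal A(y)\in S]+\delta$ for neighbors $x,y$ and all output sets $S$. *)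

From HB Require Import structures.
From mathcomp Require Import all_boot all_order all_algebra all_fingroup.
From mathcomp Require Import all_classical all_reals all_analysis.
Set Implicit Arguments. Unset Strict Implicit. Unset Printing Implicit Defensive.
Import Order.TTheory GRing.Theory Num.Theory.
Local Open Scope ring_scope.
Local Open Scope classical_set_scope.

(* A randomized mechanism with inputs in X and outputs in R^n (n-tuples of
   reals, with the product Borel sigma-algebra) is a map from inputs to
   probability distributions on outputs. *)
Definition mechanism (R : realType) (X : Type) (n : nat) :=
  X -> probability (n.-tuple R) R.

Definition DP (R : realType) (X : Type) (n : nat) (nbr : X -> X -> Prop)
    (M : mechanism R X n) (eps delta : R) : Prop :=
  forall x y, nbr x y -> forall S : set (n.-tuple R), measurable S ->
    (M x S <= (expR eps)%:E * M y S + delta%:E)%E.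

Definition prefix_nbr (R : realType) (n : nat) (s s' : n.-tuple R) : Prop :=
  \sum_(i < n) `|tnth s i - tnth s' i| <= 1.

Definition freq_nbr (n : nat) (f f' : n.-tuple nat) : Prop :=
  exists j : 'I_n, (forall i : 'I_n, i != j -> tnth f i = tnth f' i) /\
    (tnth f j = (tnth f' j).+1 \/ tnth f' j = (tnth f j).+1).

(* prefix sum  sum_{i <= k} s_i  (0-based index k, i.e. the paper's k+1) *)
Definition prefix_sum (R : realType) (n : nat) (s : n.-tuple R) (k : 'I_n) : R :=
  \sum_(i < n | (i <= k)%N) tnth s i.

Definition sorts_noninc (n : nat) (f : n.-tuple nat) (sigma : 'S_n) : bool :=
  [forall i : 'I_n, forall j : 'I_n,
     (i <= j)%N ==> (tnth f (sigma j) <= tnth f (sigma i))%N].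

(* ||f||_{top-(k+1)} = sum_{i <= k} f_{sigma(i)} for a sorting permutation
   sigma (one always exists; the value does not depend on the choice). *)
Definition topk (n : nat) (f : n.-tuple nat) (k : 'I_n) : nat :=
  if [pick sigma : 'S_n | sorts_noninc f sigma] is Some sigma
  then \sum_(i < n | (i <= k)%N) tnth f (sigma i) else 0%N.

Definition sort_vec (R : realType) (n : nat) (f : n.-tuple nat) : n.-tuple R :=
  [tuple ((nth 0%N (sort geq f) i)%:R : R) | i < n].

From HB Require Import structures.
From mathcomp Require Import all_boot all_order all_algebra all_fingroup.
From mathcomp Require Import all_classical all_reals all_analysis.
Set Implicit Arguments. Unset Strict Implicit. Unset Printing Implicit Defensive.
Import Order.TTheory GRing.Theory Num.Theory.
Local Open Scope ring_scope.
Local Open Scope classical_set_scope.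

(* Sorting sends neighbouring frequency vectors to neighbouring prefix-sum
   inputs, so the DP guarantee transfers verbatim.  If f' is f with one
   coordinate raised by 1, then f <= f' pointwise; sorting is monotone, so the
   sorted vectors are also ordered pointwise and their l1 distance telescopes
   to the difference of the totals, which is 1.  Accuracy transfers because
   the prefix sums of the sorted vector are the top-k norms. *)

Lemma geq_trans : transitive geq. Proof. exact: rev_trans leq_trans. Qed.
Lemma geq_total : total geq. Proof. by move=> m n; exact: leq_total. Qed.
Lemma geq_anti : antisymmetric geq.
Proof. by move=> m n; rewrite andbC; exact: anti_leq. Qed.

(* In a non-increasing sequence, the entries at least v form a prefix. *)
Lemma sorted_geq_nthE (a : seq nat) (v i : nat) :
  sorted geq a -> (i < size a)%N -> (v <= nth 0 a i)%N = (i < count (leq v) a)%N.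
Proof.
move=> sa lt_i_a.
have nth_le j k : (j <= k < size a)%N -> (nth 0 a k <= nth 0 a j)%N.
  move=> /andP[le_jk lt_ka].
  by apply: (sorted_leq_nth geq_trans leqnn 0 sa) => //; rewrite inE (leq_ltn_trans le_jk).
have size_take_i : size (take i a) = i by rewrite size_takel // ltnW.
rewrite -[in RHS](cat_take_drop i a) count_cat (drop_nth 0 lt_i_a) /=.
case: (leqP v (nth 0 a i)) => [le_v_ai | lt_ai_v].
  have -> : count (leq v) (take i a) = i.
    apply/eqP; rewrite -[X in _ == X]size_take_i -all_count.
    apply/(all_nthP 0) => j; rewrite size_take_i => lt_ji.
    by rewrite nth_take // (leq_trans le_v_ai) // nth_le // ltnW.
  by rewrite /= add1n addnS ltnS leq_addr.
have -> : count (leq v) (drop i.+1 a) = 0%N.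
  apply/eqP; rewrite -leqn0 leqNgt -has_count; apply/(has_nthP 0) => -[j].
  rewrite size_drop nth_drop ltn_subRL => lt_ja.
  by rewrite leqNgt (leq_ltn_trans (nth_le i _ _) lt_ai_v) // lt_ja andbT ltnW // leq_addr.
by rewrite addn0 /= addn0 ltnNge -[X in (_ <= X)%N]size_take_i count_size.
Qed.

Lemma count_leq_mono (v : nat) (s t : seq nat) : size s = size t ->
  (forall i, nth 0 s i <= nth 0 t i)%N -> (count (leq v) s <= count (leq v) t)%N.
Proof.
elim: s t => [|x s IHs] [|y t] //= [size_st] le_st.
apply: leq_add; last by apply: IHs => // i; exact: (le_st i.+1).
by case: (leqP v x) => //= le_vx; rewrite (leq_trans le_vx (le_st 0%N)).
Qed.

Lemma sort_geq_mono (s t : seq nat) : size s = size t ->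
  (forall i, nth 0 s i <= nth 0 t i)%N ->
  forall i, (nth 0 (sort geq s) i <= nth 0 (sort geq t) i)%N.
Proof.
move=> size_st le_st i.
case: (ltnP i (size s)) => [lt_i_s | le_s_i]; last by rewrite nth_default ?size_sort.
have [sorted_s sorted_t] := (sort_sorted geq_total s, sort_sorted geq_total t).
rewrite sorted_geq_nthE ?size_sort -?size_st // count_sort.
apply: leq_trans _ (count_leq_mono _ size_st le_st).
by rewrite -(count_sort geq) -sorted_geq_nthE ?size_sort.
Qed.

Lemma sum_nth_sort (leT : rel nat) (n : nat) (f : n.-tuple nat) :
  (\sum_(i < n) nth 0 (sort leT f) i = \sum_(i < n) tnth f i)%N.
Proof.
transitivity (\sum_(x <- sort leT f) x)%N.
  by rewrite (big_nth 0) big_mkord size_sort size_tuple.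
by rewrite (perm_big _ (permEl (perm_sort leT f))) big_tuple.
Qed.

Lemma sort_vec_l1_dist (R : realType) (n : nat) (f f' : n.-tuple nat) :
  (forall i, tnth f i <= tnth f' i)%N ->
  \sum_(i < n) `|tnth (sort_vec R f) i - tnth (sort_vec R f') i| =
    (\sum_(i < n) tnth f' i)%:R - (\sum_(i < n) tnth f i)%:R.
Proof.
move=> le_ff'.
have le_sorted i : (nth 0 (sort geq f) i <= nth 0 (sort geq f') i)%N.
  apply: sort_geq_mono; first by rewrite !size_tuple.
  move=> j; case: (ltnP j n) => [lt_jn | le_nj]; last by rewrite nth_default ?size_tuple.
  by rewrite -!(tnth_nth 0 _ (Ordinal lt_jn)).
under eq_bigr do rewrite !tnth_mktuple distrC ger0_norm ?subr_ge0 ?ler_nat //.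
by rewrite sumrB -!natr_sum !sum_nth_sort.
Qed.

Lemma prefix_nbr_sym (R : realType) (n : nat) (s s' : n.-tuple R) :
  prefix_nbr s s' -> prefix_nbr s' s.
Proof. by rewrite /prefix_nbr; under eq_bigr do rewrite distrC. Qed.

Lemma sort_vec_incr_nbr (R : realType) (n : nat) (f f' : n.-tuple nat) (j : 'I_n) :
  (forall i, i != j -> tnth f i = tnth f' i) -> tnth f' j = (tnth f j).+1 ->
  prefix_nbr (sort_vec R f) (sort_vec R f').
Proof.
move=> eq_off f'j.
have le_ff' i : (tnth f i <= tnth f' i)%N.
  by case: (eqVneq i j) => [-> | /eq_off ->]; rewrite ?f'j.
have sum_f' : (\sum_(i < n) tnth f' i = (\sum_(i < n) tnth f i).+1)%N.
  rewrite (bigD1 j) //= [in RHS](bigD1 j) //= f'j addSn.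
  by congr (_ + _).+1%N; apply: eq_bigr => i /eq_off ->.
by rewrite /prefix_nbr sort_vec_l1_dist // sum_f' -natr1 addrAC subrr add0r.
Qed.

Lemma freq_nbr_sort_vec (R : realType) (n : nat) (f f' : n.-tuple nat) :
  freq_nbr f f' -> prefix_nbr (sort_vec R f) (sort_vec R f').
Proof.
move=> [j [eq_off [fj | f'j]]]; last exact: sort_vec_incr_nbr eq_off f'j.
have eq_off' i : i != j -> tnth f' i = tnth f i by move/eq_off.
exact/prefix_nbr_sym/(sort_vec_incr_nbr R eq_off' fj).
Qed.

Lemma sorts_noninc_sort (n : nat) (f : n.-tuple nat) (sigma : 'S_n) :
  sorts_noninc f sigma -> [tuple tnth f (sigma i) | i < n] = sort geq f :> seq nat.
Proof.
move=> /forallP sorts.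
apply: (sorted_eq geq_trans geq_anti _ (sort_sorted geq_total f)); last first.
  by rewrite perm_sym perm_sort perm_sym; apply/tuple_permP; exists sigma.
have nth_sigma (m : 'I_n) : nth 0%N [tuple tnth f (sigma i) | i < n] m = tnth f (sigma m).
  by rewrite -tnth_nth tnth_mktuple.
rewrite sorted_pairwise; last exact: geq_trans.
apply/(pairwiseP 0) => a b; rewrite !inE size_tuple => lt_an lt_bn lt_ab.
rewrite (nth_sigma (Ordinal lt_an)) (nth_sigma (Ordinal lt_bn)).
by move: (sorts (Ordinal lt_an)) => /forallP /(_ (Ordinal lt_bn)) /implyP; apply; exact: ltnW.
Qed.

Lemma exists_sorts_noninc (n : nat) (f : n.-tuple nat) :
  exists sigma : 'S_n, sorts_noninc f sigma.
Proof.
have [sigma sort_f] := tuple_permP (permEl (perm_sort geq f)).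
exists sigma; apply/forallP => i; apply/forallP => j; apply/implyP => le_ij.
have nth_sort m : tnth f (sigma m) = nth 0 (sort geq f) m.
  by rewrite sort_f -tnth_nth tnth_mktuple.
rewrite (nth_sort i) (nth_sort j).
apply: (sorted_leq_nth geq_trans leqnn 0 (sort_sorted geq_total f)) => //.
all: by rewrite inE size_sort size_tuple.
Qed.

Lemma topk_sort (n : nat) (f : n.-tuple nat) (k : 'I_n) :
  topk f k = (\sum_(i < n | (i <= k)%N) nth 0 (sort geq f) i)%N.
Proof.
rewrite /topk; case: pickP => [sigma sorts | no_sort]; last first.
  by have [sigma] := exists_sorts_noninc f; rewrite no_sort.
apply: eq_bigr => i _.
by rewrite -(sorts_noninc_sort sorts) -tnth_nth tnth_mktuple.
Qed.

Lemma prefix_sum_sort_vec (R : realType) (n : nat) (f : n.-tuple nat) (k : 'I_n) :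
  prefix_sum (sort_vec R f) k = (topk f k)%:R.
Proof.
rewrite topk_sort natr_sum; apply: eq_bigr => i _; exact: tnth_mktuple.
Qed.

Theorem mainTheorem16 (R : realType) (n : nat) (eps delta alpha p : R)
  (M : mechanism R (n.-tuple R) n) :
  0 <= eps -> 0 <= delta -> 0 <= alpha -> 0 <= p <= 1 ->
  DP (@prefix_nbr R n) M eps delta ->
  (forall s : n.-tuple R,
     (p%:E <= M s [set a : n.-tuple R | forall k : 'I_n,
                              (`|tnth a k - prefix_sum s k| <= alpha)%R])%E) ->
  DP (@freq_nbr n) (fun f => M (sort_vec R f)) eps delta /\
  (forall f : n.-tuple nat,
     (p%:E <= M (sort_vec R f) [set a : n.-tuple R | forall k : 'I_n,
                              (`|tnth a k - (topk f k)%:R| <= alpha)%R])%E).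
Proof.
move=> _ _ _ _ dpM accM; split.
  by move=> f f' /(freq_nbr_sort_vec R) /dpM.
move=> f; have := accM (sort_vec R f).
by under eq_set do under eq_forall do rewrite prefix_sum_sort_vec.
Qed.
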